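(* Let $A$ be an $\Omega$-magma in a braided monoidal category $\mathcal C$. Let $\mathcal D$ be a full subcategory of $\mathbf{Comeas}(A,A)$ having an initial object $\rho_0\colon A\to A\otimes B_0$, and let $\mathbf{Coact}(A)(\mathcal D)$ be the full subcategory of $\mathbf{Coact}(A)$ consisting of the coactions whose underlying comeasurings belong to $\mathcal D$. Suppose that $\mathcal D$ is closed under coarsenings, and that the canonical isomorphism $A\to A\otimes\mathbbm 1$ (a comeasuring for the monoid $\mathbbm 1$) and the comeasuring $(\rho_0\otimes\mathrm{id}_{B_0})\rho_0\colon A\to A\otimes B_0\otimes B_0$ (for the monoid $B_0\otimes B_0$) are objects of $\mathcal D$. Then the monoid $B_0$ admits a unique comonoid structure turning $\rho_0$ into a coaction, and this coaction is an initial object of $\mathbf{Coact}(A)(\mathcal D)$.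
   Context: Fix a set $\Omega$ with maps $s,t\colon\Omega\to\mathbb Z_{\ge0}$. An $\Omega$-magma is an object $A$ with morphisms $\omega_A\colon A^{\otimes s(\omega)}\to A^{\otimes t(\omega)}$, $\omega\in\Omega$ ($A^{\otimes0}=\mathbbm 1$, no axioms). For a monoid $(Q,\mu,u)$ and $\rho_i\colon A_i\to B_i\otimes Q$, $\rho_1\tilde\otimes\rho_2:=(\mathrm{id}\otimes\mu)(\mathrm{id}_{B_1}\otimes c_{Q,B_2}\otimes\mathrm{id}_Q)(\rho_1\otimes\rho_2)$, $c$ the braiding; $\rho^{\tilde\otimes n}$ by iteration, $\rho^{\tilde\otimes0}=(\mathbbm 1\xrightarrow{u}Q\cong\mathbbm 1\otimes Q)$. A comeasuring $\rho\colon A\to B\otimes Q$ ($Q$ a monoid) satisfies $(\omega_B\otimes\mathrm{id}_Q)\rho^{\tilde\otimes s(\omega)}=\rho^{\tilde\otimes t(\omega)}\omega_A$ for all $\omega$. $\mathbf{Comeas}(A,A)$: objects comeasurings $A\to A\otimes Q$, morphisms monoid homomorphisms $\varphi$ with $(\mathrm{id}_A\otimes\varphi)\rho_1=\rho_2$. $\mathcal D$ is closed under coarsenings if for every object $\rho\colon A\to A\otimes Q_1$ of $\mathcal D$ and every monoid homomorphism $\tau\colon Q_1\to Q_2$, $(\mathrm{id}_A\otimes\tau)\rho$ is in $\mathcal D$. For a bimonoid $B$ (monoid and comonoid with $\Delta,\varepsilon$ monoid homomorphisms, $B\otimes B$ a monoid via the braiding), a coaction of $B$ on $A$ is a comeasuring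 $\rho\colon A\to A\otimes B$ that also makes $A$ a right $B$-comodule. $\mathbf{Coact}(A)$: objects coactions $A\to A\otimes B$ ($B$ arbitrary bimonoid), morphisms bimonoid homomorphisms $\varphi$ with $(\mathrm{id}_A\otimes\varphi)\rho_1=\rho_2$. *)

(* Hom-sets are types and equality of morphisms is Leibniz equality. *)
From Stdlib Require Import Arith.

Class BMCData (ob : Type) (hom : ob -> ob -> Type) := {
  comp : forall X Y Z : ob, hom Y Z -> hom X Y -> hom X Z;
  idm : forall X : ob, hom X X;
  tens : ob -> ob -> ob;
  tensm : forall X X' Y Y' : ob, hom X X' -> hom Y Y' -> hom (tens X Y) (tens X' Y');
  unit_ob : ob;
  assoc : forall X Y Z : ob, hom (tens (tens X Y) Z) (tens X (tens Y Z));
  assoc_inv : forall X Y Z : ob, hom (tens X (tens Y Z)) (tens (tens X Y) Z);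
  lunit : forall X : ob, hom (tens unit_ob X) X;
  lunit_inv : forall X : ob, hom X (tens unit_ob X);
  runit : forall X : ob, hom (tens X unit_ob) X;
  runit_inv : forall X : ob, hom X (tens X unit_ob);
  braid : forall X Y : ob, hom (tens X Y) (tens Y X);
  braid_inv : forall X Y : ob, hom (tens Y X) (tens X Y)
}.

Arguments comp {ob hom _ X Y Z} _ _.
Arguments idm {ob hom _} X.
Arguments tens {ob hom _} _ _.
Arguments tensm {ob hom _ X X' Y Y'} _ _.
Arguments unit_ob {ob hom _}.
Arguments assoc {ob hom _} X Y Z.
Arguments assoc_inv {ob hom _} X Y Z.
Arguments lunit {ob hom _} X.
Arguments lunit_inv {ob hom _} X.
Arguments runit {ob hom _} X.
Arguments runit_inv {ob hom _} X.
Arguments braid {ob hom _} X Y.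
Arguments braid_inv {ob hom _} X Y.

Declare Scope cat_scope.
Delimit Scope cat_scope with cat.
Notation "g ∘ f" := (comp g f) (at level 40, left associativity) : cat_scope.
Notation "X ⊗ Y" := (tens X Y) (at level 34, right associativity) : cat_scope.
Notation "f ⊗' g" := (tensm f g) (at level 34, right associativity) : cat_scope.
Notation "'𝟙'" := unit_ob : cat_scope.
Open Scope cat_scope.

Record is_bmc (ob : Type) (hom : ob -> ob -> Type) (C : @BMCData ob hom) : Prop := {
  comp_idl : forall X Y (f : hom X Y), idm Y ∘ f = f;
  comp_idr : forall X Y (f : hom X Y), f ∘ idm X = f;
  comp_assoc : forall X Y Z W (f : hom X Y) (g : hom Y Z) (h : hom Z W),
      h ∘ (g ∘ f) = (h ∘ g) ∘ f;
  tensm_id : forall X Y, idm X ⊗' idm Y = idm (X ⊗ Y);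
  tensm_comp : forall X1 X2 X3 Y1 Y2 Y3 (f : hom X1 X2) (f' : hom X2 X3)
      (g : hom Y1 Y2) (g' : hom Y2 Y3),
      (f' ∘ f) ⊗' (g' ∘ g) = (f' ⊗' g') ∘ (f ⊗' g);
  assoc_iso1 : forall X Y Z, assoc_inv X Y Z ∘ assoc X Y Z = idm ((X ⊗ Y) ⊗ Z);
  assoc_iso2 : forall X Y Z, assoc X Y Z ∘ assoc_inv X Y Z = idm (X ⊗ (Y ⊗ Z));
  assoc_nat : forall X X' Y Y' Z Z' (f : hom X X') (g : hom Y Y') (h : hom Z Z'),
      assoc X' Y' Z' ∘ ((f ⊗' g) ⊗' h) = (f ⊗' (g ⊗' h)) ∘ assoc X Y Z;
  lunit_iso1 : forall X, lunit_inv X ∘ lunit X = idm (𝟙 ⊗ X);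
  lunit_iso2 : forall X, lunit X ∘ lunit_inv X = idm X;
  lunit_nat : forall X Y (f : hom X Y), lunit Y ∘ (idm 𝟙 ⊗' f) = f ∘ lunit X;
  runit_iso1 : forall X, runit_inv X ∘ runit X = idm (X ⊗ 𝟙);
  runit_iso2 : forall X, runit X ∘ runit_inv X = idm X;
  runit_nat : forall X Y (f : hom X Y), runit Y ∘ (f ⊗' idm 𝟙) = f ∘ runit X;
  pentagon : forall W X Y Z,
      assoc W X (Y ⊗ Z) ∘ assoc (W ⊗ X) Y Z
      = (idm W ⊗' assoc X Y Z) ∘ assoc W (X ⊗ Y) Z ∘ (assoc W X Y ⊗' idm Z);
  triangle : forall X Y,
      (idm X ⊗' lunit Y) ∘ assoc X 𝟙 Y = runit X ⊗' idm Y;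
  braid_iso1 : forall X Y, braid_inv X Y ∘ braid X Y = idm (X ⊗ Y);
  braid_iso2 : forall X Y, braid X Y ∘ braid_inv X Y = idm (Y ⊗ X);
  braid_nat : forall X X' Y Y' (f : hom X X') (g : hom Y Y'),
      braid X' Y' ∘ (f ⊗' g) = (g ⊗' f) ∘ braid X Y;
  hexagon1 : forall X Y Z,
      assoc Y Z X ∘ braid X (Y ⊗ Z) ∘ assoc X Y Z
      = (idm Y ⊗' braid X Z) ∘ assoc Y X Z ∘ (braid X Y ⊗' idm Z);
  hexagon2 : forall X Y Z,
      assoc_inv Z X Y ∘ braid (X ⊗ Y) Z ∘ assoc_inv X Y Z
      = (braid X Z ⊗' idm Y) ∘ assoc_inv X Z Y ∘ (idm X ⊗' braid Y Z)
}.

Section Defs.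
Context {ob : Type} {hom : ob -> ob -> Type} {C : @BMCData ob hom}.

Fixpoint tpow (A : ob) (n : nat) : ob :=
  match n with
  | 0 => 𝟙
  | S k => match k with 0 => A | S _ => tpow A k ⊗ A end
  end.

Definition is_monoid (Q : ob) (mu : hom (Q ⊗ Q) Q) (u : hom 𝟙 Q) : Prop :=
  mu ∘ (mu ⊗' idm Q) = mu ∘ (idm Q ⊗' mu) ∘ assoc Q Q Q /\
  mu ∘ (u ⊗' idm Q) = lunit Q /\
  mu ∘ (idm Q ⊗' u) = runit Q.

Definition monoid_hom (Q1 : ob) (mu1 : hom (Q1 ⊗ Q1) Q1) (u1 : hom 𝟙 Q1)
    (Q2 : ob) (mu2 : hom (Q2 ⊗ Q2) Q2) (u2 : hom 𝟙 Q2) (f : hom Q1 Q2) : Prop :=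
  f ∘ mu1 = mu2 ∘ (f ⊗' f) /\ f ∘ u1 = u2.

Definition unit_mu : hom (𝟙 ⊗ 𝟙) 𝟙 := lunit 𝟙.
Definition unit_u : hom 𝟙 𝟙 := idm 𝟙.

Definition mid_swap (X Y Z W : ob) : hom ((X ⊗ Y) ⊗ (Z ⊗ W)) ((X ⊗ Z) ⊗ (Y ⊗ W)) :=
  assoc_inv X Z (Y ⊗ W) ∘ (idm X ⊗' assoc Z Y W) ∘ (idm X ⊗' (braid Y Z ⊗' idm W))
  ∘ (idm X ⊗' assoc_inv Y Z W) ∘ assoc X Y (Z ⊗ W).

Definition tmu (Q : ob) (mu : hom (Q ⊗ Q) Q) : hom ((Q ⊗ Q) ⊗ (Q ⊗ Q)) (Q ⊗ Q) :=
  (mu ⊗' mu) ∘ mid_swap Q Q Q Q.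
Definition tu (Q : ob) (u : hom 𝟙 Q) : hom 𝟙 (Q ⊗ Q) :=
  (u ⊗' u) ∘ lunit_inv 𝟙.

Definition is_comonoid (Q : ob) (d : hom Q (Q ⊗ Q)) (e : hom Q 𝟙) : Prop :=
  assoc Q Q Q ∘ (d ⊗' idm Q) ∘ d = (idm Q ⊗' d) ∘ d /\
  lunit Q ∘ (e ⊗' idm Q) ∘ d = idm Q /\
  runit Q ∘ (idm Q ⊗' e) ∘ d = idm Q.

Definition is_bimonoid (B : ob) (mu : hom (B ⊗ B) B) (u : hom 𝟙 B)
    (d : hom B (B ⊗ B)) (e : hom B 𝟙) : Prop :=
  is_monoid B mu u /\ is_comonoid B d e /\
  monoid_hom B mu u (B ⊗ B) (tmu B mu) (tu B u) d /\
  monoid_hom B mu u 𝟙 unit_mu unit_u e.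

Definition bimonoid_hom (B1 : ob) (mu1 : hom (B1 ⊗ B1) B1) (u1 : hom 𝟙 B1)
    (d1 : hom B1 (B1 ⊗ B1)) (e1 : hom B1 𝟙)
    (B2 : ob) (mu2 : hom (B2 ⊗ B2) B2) (u2 : hom 𝟙 B2)
    (d2 : hom B2 (B2 ⊗ B2)) (e2 : hom B2 𝟙) (f : hom B1 B2) : Prop :=
  monoid_hom B1 mu1 u1 B2 mu2 u2 f /\
  d2 ∘ f = (f ⊗' f) ∘ d1 /\ e2 ∘ f = e1.

(* rho1 ~⊗ rho2 = (id ⊗ mu)(id_{B1} ⊗ c_{Q,B2} ⊗ id_Q)(rho1 ⊗ rho2),
   with the associativity constraints made explicit. *)
Definition ttens (Q : ob) (mu : hom (Q ⊗ Q) Q) (A1 B1 A2 B2 : ob)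
    (r1 : hom A1 (B1 ⊗ Q)) (r2 : hom A2 (B2 ⊗ Q)) : hom (A1 ⊗ A2) ((B1 ⊗ B2) ⊗ Q) :=
  assoc_inv B1 B2 Q ∘ (idm B1 ⊗' (idm B2 ⊗' mu)) ∘ (idm B1 ⊗' assoc B2 Q Q)
  ∘ (idm B1 ⊗' (braid Q B2 ⊗' idm Q)) ∘ (idm B1 ⊗' assoc_inv Q B2 Q)
  ∘ assoc B1 Q (B2 ⊗ Q) ∘ (r1 ⊗' r2).

(* rho^{~⊗ n} : A^n -> B^n ⊗ Q;  rho^{~⊗0} = (𝟙 -u-> Q ≅ 𝟙 ⊗ Q),
   rho^{~⊗1} = rho, rho^{~⊗(n+2)} = rho^{~⊗(n+1)} ~⊗ rho. *)
Fixpoint rpow (Q : ob) (mu : hom (Q ⊗ Q) Q) (u : hom 𝟙 Q) (A B : ob)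
    (r : hom A (B ⊗ Q)) (n : nat) : hom (tpow A n) (tpow B n ⊗ Q) :=
  match n as n0 return hom (tpow A n0) (tpow B n0 ⊗ Q) with
  | 0 => lunit_inv Q ∘ u
  | S k =>
    (match k as k0 return
        hom (tpow A k0) (tpow B k0 ⊗ Q) -> hom (tpow A (S k0)) (tpow B (S k0) ⊗ Q)
     with
     | 0 => fun _ => r
     | S _ => fun prev => ttens Q mu _ _ _ _ prev r
     end) (rpow Q mu u A B r k)
  end.

Definition magma_ops (Omega : Type) (s t : Omega -> nat) (A : ob) : Type :=
  forall w : Omega, hom (tpow A (s w)) (tpow A (t w)).

Definition is_comeasuring (Omega : Type) (s t : Omega -> nat) (A B : ob)
    (opsA : magma_ops Omega s t A) (opsB : magma_ops Omega s t B)
    (Q : ob) (mu : hom (Q ⊗ Q) Q) (u : hom 𝟙 Q) (r : hom A (B ⊗ Q)) : Prop :=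
  forall w : Omega, (opsB w ⊗' idm Q) ∘ rpow Q mu u A B r (s w) = rpow Q mu u A B r (t w) ∘ opsA w.

Definition is_comodule (A B : ob) (d : hom B (B ⊗ B)) (e : hom B 𝟙)
    (r : hom A (A ⊗ B)) : Prop :=
  assoc_inv A B B ∘ (idm A ⊗' d) ∘ r = (r ⊗' idm B) ∘ r /\
  runit A ∘ (idm A ⊗' e) ∘ r = idm A.

Definition is_coaction (Omega : Type) (s t : Omega -> nat) (A : ob)
    (opsA : magma_ops Omega s t A) (B : ob) (mu : hom (B ⊗ B) B) (u : hom 𝟙 B)
    (d : hom B (B ⊗ B)) (e : hom B 𝟙) (r : hom A (A ⊗ B)) : Prop :=
  is_bimonoid B mu u d e /\ is_comeasuring Omega s t A A opsA opsA B mu u r /\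
  is_comodule A B d e r.

End Defs.


(* The comultiplication d0 and the counit e0 of B0 are the monoid maps that initiality of
   rho0 attaches to the comeasurings (rho0 ⊗ id) rho0 and A ≅ A ⊗ 𝟙.  Every identity that remains
   (coassociativity, counitality, uniqueness of d0 and e0, compatibility of the induced maps
   B0 -> B with comultiplications and counits) is an equation phi = psi between monoid maps out
   of B0 such that (id ⊗ phi) rho0 = (id ⊗ psi) rho0.  Since D is closed under coarsenings, this
   common comeasuring lies in D, and initiality of rho0 forces phi = psi.  What is left is
   coherence in a braided monoidal category: the tensor product of two monoids is a monoid, and
   the associator and unitors are monoid maps between such products. *)

Section BraidedMonoidal.
Context {ob : Type} {hom : ob -> ob -> Type} {C : @BMCData ob hom} (HC : is_bmc ob hom C).

Lemma compA {X Y Z W} (f : hom X Y) (g : hom Y Z) (h : hom Z W) : h ∘ (g ∘ f) = h ∘ g ∘ f.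
Proof. exact (comp_assoc _ _ _ HC _ _ _ _ f g h). Qed.
Lemma idm_comp {X Y} (f : hom X Y) : idm Y ∘ f = f.
Proof. exact (comp_idl _ _ _ HC _ _ f). Qed.
Lemma comp_idm {X Y} (f : hom X Y) : f ∘ idm X = f.
Proof. exact (comp_idr _ _ _ HC _ _ f). Qed.
Lemma tensm_idmE X Y : idm X ⊗' idm Y = idm (X ⊗ Y).
Proof. exact (tensm_id _ _ _ HC X Y). Qed.
Lemma tensm_compE {X1 X2 X3 Y1 Y2 Y3} (f : hom X1 X2) (f' : hom X2 X3) (g : hom Y1 Y2) (g' : hom Y2 Y3) :
  (f' ∘ f) ⊗' (g' ∘ g) = (f' ⊗' g') ∘ (f ⊗' g).
Proof. exact (tensm_comp _ _ _ HC _ _ _ _ _ _ f f' g g'). Qed.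

Lemma assocK X Y Z : assoc_inv X Y Z ∘ assoc X Y Z = idm ((X ⊗ Y) ⊗ Z).
Proof. exact (assoc_iso1 _ _ _ HC X Y Z). Qed.
Lemma assoc_invK X Y Z : assoc X Y Z ∘ assoc_inv X Y Z = idm (X ⊗ (Y ⊗ Z)).
Proof. exact (assoc_iso2 _ _ _ HC X Y Z). Qed.
Lemma lunitK X : lunit_inv X ∘ lunit X = idm (𝟙 ⊗ X).
Proof. exact (lunit_iso1 _ _ _ HC X). Qed.
Lemma lunit_invK X : lunit X ∘ lunit_inv X = idm X.
Proof. exact (lunit_iso2 _ _ _ HC X). Qed.
Lemma runitK X : runit_inv X ∘ runit X = idm (X ⊗ 𝟙).
Proof. exact (runit_iso1 _ _ _ HC X). Qed.
Lemma runit_invK X : runit X ∘ runit_inv X = idm X.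
Proof. exact (runit_iso2 _ _ _ HC X). Qed.
Lemma braidK X Y : braid_inv X Y ∘ braid X Y = idm (X ⊗ Y).
Proof. exact (braid_iso1 _ _ _ HC X Y). Qed.
Lemma assoc_natE {X X' Y Y' Z Z'} (f : hom X X') (g : hom Y Y') (h : hom Z Z') :
  assoc X' Y' Z' ∘ ((f ⊗' g) ⊗' h) = (f ⊗' (g ⊗' h)) ∘ assoc X Y Z.
Proof. exact (assoc_nat _ _ _ HC _ _ _ _ _ _ f g h). Qed.
Lemma lunit_natE {X Y} (f : hom X Y) : lunit Y ∘ (idm 𝟙 ⊗' f) = f ∘ lunit X.
Proof. exact (lunit_nat _ _ _ HC _ _ f). Qed.
Lemma runit_natE {X Y} (f : hom X Y) : runit Y ∘ (f ⊗' idm 𝟙) = f ∘ runit X.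
Proof. exact (runit_nat _ _ _ HC _ _ f). Qed.
Lemma braid_natE {X X' Y Y'} (f : hom X X') (g : hom Y Y') :
  braid X' Y' ∘ (f ⊗' g) = (g ⊗' f) ∘ braid X Y.
Proof. exact (braid_nat _ _ _ HC _ _ _ _ f g). Qed.
Lemma pentagonE W X Y Z : assoc W X (Y ⊗ Z) ∘ assoc (W ⊗ X) Y Z
      = (idm W ⊗' assoc X Y Z) ∘ assoc W (X ⊗ Y) Z ∘ (assoc W X Y ⊗' idm Z).
Proof. exact (pentagon _ _ _ HC W X Y Z). Qed.
Lemma triangleE X Y : (idm X ⊗' lunit Y) ∘ assoc X 𝟙 Y = runit X ⊗' idm Y.
Proof. exact (triangle _ _ _ HC X Y). Qed.
Lemma hexagon1E X Y Z : assoc Y Z X ∘ braid X (Y ⊗ Z) ∘ assoc X Y Z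
      = (idm Y ⊗' braid X Z) ∘ assoc Y X Z ∘ (braid X Y ⊗' idm Z).
Proof. exact (hexagon1 _ _ _ HC X Y Z). Qed.
Lemma hexagon2E X Y Z : assoc_inv Z X Y ∘ braid (X ⊗ Y) Z ∘ assoc_inv X Y Z
      = (braid X Z ⊗' idm Y) ∘ assoc_inv X Z Y ∘ (idm X ⊗' braid Y Z).
Proof. exact (hexagon2 _ _ _ HC X Y Z). Qed.

Lemma chain_in2 {A1 A2 A3} {g : hom A2 A3} {f : hom A1 A2} {k : hom A1 A3} :
  g ∘ f = k -> forall Z (X : hom Z A1), g ∘ (f ∘ X) = k ∘ X.
Proof. intros H Z X. rewrite compA, H. reflexivity. Qed.
Lemma chain_in3 {A1 A2 A3 A4} {h : hom A3 A4} {g : hom A2 A3} {f : hom A1 A2} {k : hom A1 A4} :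
  h ∘ g ∘ f = k -> forall Z (X : hom Z A1), h ∘ (g ∘ (f ∘ X)) = k ∘ X.
Proof. intros H Z X. rewrite !compA, H. reflexivity. Qed.
Lemma chain_end3 {A1 A2 A3 A4} {h : hom A3 A4} {g : hom A2 A3} {f : hom A1 A2} {k : hom A1 A4} :
  h ∘ g ∘ f = k -> h ∘ (g ∘ f) = k.
Proof. intros H. rewrite compA, H. reflexivity. Qed.
Lemma chain_in4 {A1 A2 A3 A4 A5}
    {i : hom A4 A5} {h : hom A3 A4} {g : hom A2 A3} {f : hom A1 A2} {k : hom A1 A5} :
  i ∘ h ∘ g ∘ f = k -> forall Z (X : hom Z A1), i ∘ (h ∘ (g ∘ (f ∘ X))) = k ∘ X.
Proof. intros H Z X. rewrite !compA, H. reflexivity. Qed.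
Lemma chain_end4 {A1 A2 A3 A4 A5}
    {i : hom A4 A5} {h : hom A3 A4} {g : hom A2 A3} {f : hom A1 A2} {k : hom A1 A5} :
  i ∘ h ∘ g ∘ f = k -> i ∘ (h ∘ (g ∘ f)) = k.
Proof. intros H. rewrite !compA, H. reflexivity. Qed.
Lemma chain_in5 {A1 A2 A3 A4 A5 A6} {j : hom A5 A6}
    {i : hom A4 A5} {h : hom A3 A4} {g : hom A2 A3} {f : hom A1 A2} {k : hom A1 A6} :
  j ∘ i ∘ h ∘ g ∘ f = k -> forall Z (X : hom Z A1), j ∘ (i ∘ (h ∘ (g ∘ (f ∘ X)))) = k ∘ X.
Proof. intros H Z X. rewrite !compA, H. reflexivity. Qed.
Lemma chain_end5 {A1 A2 A3 A4 A5 A6} {j : hom A5 A6}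
    {i : hom A4 A5} {h : hom A3 A4} {g : hom A2 A3} {f : hom A1 A2} {k : hom A1 A6} :
  j ∘ i ∘ h ∘ g ∘ f = k -> j ∘ (i ∘ (h ∘ (g ∘ f))) = k.
Proof. intros H. rewrite !compA, H. reflexivity. Qed.

Lemma tensm_compl {X1 X2 X3 Y1 Y2} (f : hom X1 X2) (f' : hom X2 X3) (g : hom Y1 Y2) :
  (f' ∘ f) ⊗' g = (f' ⊗' g) ∘ (f ⊗' idm Y1).
Proof. rewrite <- tensm_compE, comp_idm. reflexivity. Qed.
Lemma tensm_compr {X1 X2 Y1 Y2 Y3} (f : hom X1 X2) (g : hom Y1 Y2) (g' : hom Y2 Y3) :
  f ⊗' (g' ∘ g) = (f ⊗' g') ∘ (idm X1 ⊗' g).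
Proof. rewrite <- tensm_compE, comp_idm. reflexivity. Qed.

(* [normalize] splits tensor products of composites into whiskered factors, drops identities and
   right-associates composition.  [rw T] rewrites with an equation [T] between chains of at most
   five morphisms anywhere inside such a normal form and renormalizes; [rw_assoc T] only
   reassociates afterwards, keeping tensor products of composites intact. *)
Ltac reassoc := repeat rewrite <- compA.
Ltac normalize :=
  repeat (rewrite tensm_compl || rewrite tensm_compr); repeat rewrite tensm_idmE;
  repeat (rewrite idm_comp || rewrite comp_idm); reassoc.
Tactic Notation "chain_rewrite" uconstr(T) :=
  first [ rewrite (chain_in5 T) | rewrite (chain_end5 T) | rewrite (chain_in4 T) | rewrite (chain_end4 T)
        | rewrite (chain_in3 T) | rewrite (chain_end3 T) | rewrite (chain_in2 T) | rewrite T ].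
Tactic Notation "rw" uconstr(T) := chain_rewrite T; normalize.
Tactic Notation "rw_assoc" uconstr(T) := chain_rewrite T; reassoc.
Tactic Notation "rwl" uconstr(T) := rw (eq_sym T).

(** * Coherence *)

Lemma split_epi_cancel {X Y Z} (f g : hom Y Z) (k : hom X Y) (k' : hom Y X) :
  k ∘ k' = idm Y -> f ∘ k = g ∘ k -> f = g.
Proof. intros H E. rewrite <- (comp_idm f), <- (comp_idm g), <- H, !compA, E. reflexivity. Qed.
Lemma split_mono_cancel {X Y Z} (f g : hom X Y) (k : hom Y Z) (k' : hom Z Y) :
  k' ∘ k = idm Y -> k ∘ f = k ∘ g -> f = g.
Proof. intros H E. rewrite <- (idm_comp f), <- (idm_comp g), <- H, <- !compA, E. reflexivity. Qed.
Lemma tensm_rinv {X Y X' Y'} (f : hom X X') (f' : hom X' X) (g : hom Y Y') (g' : hom Y' Y) :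
  f ∘ f' = idm X' -> g ∘ g' = idm Y' -> (f ⊗' g) ∘ (f' ⊗' g') = idm (X' ⊗ Y').
Proof. intros H1 H2. rewrite <- tensm_compE, H1, H2, tensm_idmE. reflexivity. Qed.
Lemma comp_rinv {X Y Z} (f : hom Y Z) (f' : hom Z Y) (g : hom X Y) (g' : hom Y X) :
  f ∘ f' = idm Z -> g ∘ g' = idm Y -> (f ∘ g) ∘ (g' ∘ f') = idm Z.
Proof. intros H1 H2. rewrite <- !compA, (compA f' g' g), H2, idm_comp, H1. reflexivity. Qed.

Lemma assoc_natl {X X' Y Z} (f : hom X X') :
  assoc X' Y Z ∘ ((f ⊗' idm Y) ⊗' idm Z) = (f ⊗' idm (Y ⊗ Z)) ∘ assoc X Y Z.
Proof. rewrite assoc_natE, tensm_idmE. reflexivity. Qed.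
Lemma assoc_natr {X Y Z Z'} (h : hom Z Z') :
  assoc X Y Z' ∘ (idm (X ⊗ Y) ⊗' h) = (idm X ⊗' (idm Y ⊗' h)) ∘ assoc X Y Z.
Proof. rewrite <- tensm_idmE, assoc_natE. reflexivity. Qed.
Lemma assoc_inv_natE {X X' Y Y' Z Z'} (f : hom X X') (g : hom Y Y') (h : hom Z Z') :
  assoc_inv X' Y' Z' ∘ (f ⊗' (g ⊗' h)) = ((f ⊗' g) ⊗' h) ∘ assoc_inv X Y Z.
Proof.
  apply (split_mono_cancel _ _ (assoc X' Y' Z') (assoc_inv X' Y' Z')); [apply assocK|].
  rewrite compA, assoc_invK, idm_comp, compA, assoc_natE, <- compA, assoc_invK, comp_idm.
  reflexivity.
Qed.
Lemma assoc_inv_natr {X Y Z Z'} (h : hom Z Z') :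
  assoc_inv X Y Z' ∘ (idm X ⊗' (idm Y ⊗' h)) = (idm (X ⊗ Y) ⊗' h) ∘ assoc_inv X Y Z.
Proof. rewrite assoc_inv_natE, tensm_idmE. reflexivity. Qed.
Lemma tensm_interchange {X X' Y Y'} (f : hom X X') (g : hom Y Y') :
  (f ⊗' idm Y') ∘ (idm X ⊗' g) = (idm X' ⊗' g) ∘ (f ⊗' idm Y).
Proof. rewrite <- !tensm_compE, !idm_comp, !comp_idm. reflexivity. Qed.
Lemma whisker_l {W A1 A2 A3} {g : hom A2 A3} {f : hom A1 A2} {k : hom A1 A3} :
  g ∘ f = k -> (idm W ⊗' g) ∘ (idm W ⊗' f) = idm W ⊗' k.
Proof. intros H. rewrite <- tensm_compE, H, idm_comp. reflexivity. Qed.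
Lemma whisker_r {W A1 A2 A3} {g : hom A2 A3} {f : hom A1 A2} {k : hom A1 A3} :
  g ∘ f = k -> (g ⊗' idm W) ∘ (f ⊗' idm W) = k ⊗' idm W.
Proof. intros H. rewrite <- tensm_compE, H, idm_comp. reflexivity. Qed.
Lemma whisker_l3 {W A1 A2 A3 A4} {h : hom A3 A4} {g : hom A2 A3} {f : hom A1 A2} {k : hom A1 A4} :
  h ∘ g ∘ f = k -> (idm W ⊗' h) ∘ (idm W ⊗' g) ∘ (idm W ⊗' f) = idm W ⊗' k.
Proof. intros H. rewrite <- !tensm_compE, H, !idm_comp. reflexivity. Qed.
Lemma whisker_r3 {W A1 A2 A3 A4} {h : hom A3 A4} {g : hom A2 A3} {f : hom A1 A2} {k : hom A1 A4} :
  h ∘ g ∘ f = k -> (h ⊗' idm W) ∘ (g ⊗' idm W) ∘ (f ⊗' idm W) = k ⊗' idm W.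
Proof. intros H. rewrite <- !tensm_compE, H, !idm_comp. reflexivity. Qed.

Lemma unit_tensm_inj {X Y} (f g : hom X Y) : idm 𝟙 ⊗' f = idm 𝟙 ⊗' g -> f = g.
Proof.
  intros E. apply (split_epi_cancel _ _ (lunit X) (lunit_inv X)); [apply lunit_invK|].
  rewrite <- !lunit_natE, E. reflexivity.
Qed.
Lemma tensm_unit_inj {X Y} (f g : hom X Y) : f ⊗' idm 𝟙 = g ⊗' idm 𝟙 -> f = g.
Proof.
  intros E. apply (split_epi_cancel _ _ (runit X) (runit_inv X)); [apply runit_invK|].
  rewrite <- !runit_natE, E. reflexivity.
Qed.

Lemma lunit_tensor X Y : lunit (X ⊗ Y) ∘ assoc 𝟙 X Y = lunit X ⊗' idm Y.
Proof.
  apply unit_tensm_inj.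
  apply (split_epi_cancel _ _ (assoc 𝟙 (𝟙 ⊗ X) Y ∘ (assoc 𝟙 𝟙 X ⊗' idm Y))
                      ((assoc_inv 𝟙 𝟙 X ⊗' idm Y) ∘ assoc_inv 𝟙 (𝟙 ⊗ X) Y)).
  { apply comp_rinv. apply assoc_invK. apply tensm_rinv. apply assoc_invK. apply idm_comp. }
  normalize.
  rwl (pentagonE 𝟙 𝟙 X Y).
  rw (triangleE 𝟙 (X ⊗ Y)).
  rwl (assoc_natl (runit 𝟙)).
  rwl (triangleE 𝟙 X).
  rw (assoc_natE (idm 𝟙) (lunit X) (idm Y)).
  reflexivity.
Qed.

Lemma lunit_tensorV X Y : (lunit X ⊗' idm Y) ∘ assoc_inv 𝟙 X Y = lunit (X ⊗ Y).
Proof. rewrite <- lunit_tensor, <- compA, assoc_invK, comp_idm. reflexivity. Qed.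
Lemma triangleV X Y : (runit X ⊗' idm Y) ∘ assoc_inv X 𝟙 Y = idm X ⊗' lunit Y.
Proof. rewrite <- triangleE, <- compA, assoc_invK, comp_idm. reflexivity. Qed.
Lemma lunit_unit_tensor X : lunit (𝟙 ⊗ X) = idm 𝟙 ⊗' lunit X.
Proof.
  apply (split_mono_cancel _ _ (lunit X) (lunit_inv X)); [apply lunitK|].
  rewrite lunit_natE. reflexivity.
Qed.
Lemma runit_tensor X Y : (idm X ⊗' runit Y) ∘ assoc X Y 𝟙 = runit (X ⊗ Y).
Proof.
  apply tensm_unit_inj.
  apply (split_mono_cancel _ _ (assoc X Y 𝟙) (assoc_inv X Y 𝟙)); [apply assocK|].
  normalize.
  rwl (triangleE (X ⊗ Y) 𝟙).
  rw (assoc_natr (X:=X) (Y:=Y) (lunit 𝟙)).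
  rw (pentagonE X Y 𝟙 𝟙).
  rw (whisker_l (triangleE Y 𝟙)).
  rw (assoc_natE (idm X) (runit Y) (idm 𝟙)).
  reflexivity.
Qed.
Lemma runit_tensorV X Y : runit (X ⊗ Y) ∘ assoc_inv X Y 𝟙 = idm X ⊗' runit Y.
Proof. rewrite <- runit_tensor, <- compA, assoc_invK, comp_idm. reflexivity. Qed.
Lemma lunit_unit_runit : lunit 𝟙 = runit 𝟙.
Proof.
  apply tensm_unit_inj. rewrite <- lunit_tensor, <- triangleE, lunit_unit_tensor. reflexivity.
Qed.
Lemma lunit_braid X : lunit X ∘ braid X 𝟙 = runit X.
Proof.
  apply tensm_unit_inj.
  apply (split_mono_cancel _ _ (braid X 𝟙) (braid_inv X 𝟙)); [apply braidK|].
  normalize.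
  rwl (triangleE X 𝟙).
  rw (braid_natE (idm X) (lunit 𝟙)).
  rwl (lunit_tensor 𝟙 X).
  rw (hexagon1E X 𝟙 𝟙).
  rw (lunit_natE (braid X 𝟙)).
  rw (lunit_tensor X 𝟙).
  reflexivity.
Qed.
Lemma runit_braid X : runit X ∘ braid 𝟙 X = lunit X.
Proof.
  apply unit_tensm_inj.
  apply (split_mono_cancel _ _ (braid 𝟙 X) (braid_inv 𝟙 X)); [apply braidK|].
  normalize.
  rwl (triangleV 𝟙 X).
  rw (braid_natE (runit 𝟙) (idm X)).
  rwl (runit_tensorV X 𝟙).
  rw (hexagon2E 𝟙 𝟙 X).
  rw (runit_natE (braid 𝟙 X)).
  rw (runit_tensorV 𝟙 X).
  reflexivity.
Qed.

Lemma whisker_l_square {X X' A B C' D'}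
    {a : hom B C'} {p : hom A B} {q : hom D' C'} {b : hom A D'} (f : hom X X') :
  a ∘ p = q ∘ b -> (idm X' ⊗' a) ∘ (f ⊗' p) = (f ⊗' q) ∘ (idm X ⊗' b).
Proof. intros H. rewrite <- !tensm_compE, H, idm_comp, comp_idm. reflexivity. Qed.
Lemma whisker_r_square {X X' A B C' D'}
    {a : hom B C'} {p : hom A B} {q : hom D' C'} {b : hom A D'} (f : hom X X') :
  a ∘ p = q ∘ b -> (a ⊗' idm X') ∘ (p ⊗' f) = (q ⊗' f) ∘ (b ⊗' idm X).
Proof. intros H. rewrite <- !tensm_compE, H, idm_comp, comp_idm. reflexivity. Qed.
Lemma tensm_splitl {X X' Y Y'} (f : hom X X') (g : hom Y Y') : f ⊗' g = (f ⊗' idm Y') ∘ (idm X ⊗' g).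
Proof. rewrite <- tensm_compE, idm_comp, comp_idm. reflexivity. Qed.
Lemma tensm_splitr {X X' Y Y'} (f : hom X X') (g : hom Y Y') : f ⊗' g = (idm X' ⊗' g) ∘ (f ⊗' idm Y).
Proof. rewrite <- tensm_compE, idm_comp, comp_idm. reflexivity. Qed.

Lemma pentagonE1 W X Y Z : assoc_inv W X (Y ⊗ Z) ∘ (idm W ⊗' assoc X Y Z) ∘ assoc W (X ⊗ Y) Z
  = assoc (W ⊗ X) Y Z ∘ (assoc_inv W X Y ⊗' idm Z).
Proof.
  apply (split_mono_cancel _ _ (assoc W X (Y ⊗ Z)) (assoc_inv W X (Y ⊗ Z))); [apply assocK|].
  normalize. rw (assoc_invK W X (Y ⊗ Z)). rw (pentagonE W X Y Z). rw (whisker_r (assoc_invK W X Y)).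
  reflexivity.
Qed.
Lemma pentagonE2 W X Y Z : (idm W ⊗' assoc_inv X Y Z) ∘ assoc W X (Y ⊗ Z) ∘ assoc (W ⊗ X) Y Z
  = assoc W (X ⊗ Y) Z ∘ (assoc W X Y ⊗' idm Z).
Proof.
  normalize. rw (pentagonE W X Y Z). rw (whisker_l (assocK X Y Z)). reflexivity.
Qed.
Lemma pentagon_invE W X Y Z : assoc_inv (W ⊗ X) Y Z ∘ assoc_inv W X (Y ⊗ Z)
  = (assoc_inv W X Y ⊗' idm Z) ∘ assoc_inv W (X ⊗ Y) Z ∘ (idm W ⊗' assoc_inv X Y Z).
Proof.
  apply (split_epi_cancel _ _ (assoc W X (Y ⊗ Z) ∘ assoc (W ⊗ X) Y Z)
                             (assoc_inv (W ⊗ X) Y Z ∘ assoc_inv W X (Y ⊗ Z))).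
  { apply comp_rinv; apply assoc_invK. }
  normalize. rw (assocK W X (Y ⊗ Z)). rw (assocK (W ⊗ X) Y Z). rw (pentagonE W X Y Z).
  rw (whisker_l (assocK X Y Z)). rw (assocK W (X ⊗ Y) Z). rw (whisker_r (assocK W X Y)).
  reflexivity.
Qed.

Definition lswap (Y Z W : ob) : hom (Y ⊗ (Z ⊗ W)) (Z ⊗ (Y ⊗ W)) :=
  assoc Z Y W ∘ (braid Y Z ⊗' idm W) ∘ assoc_inv Y Z W.
Lemma lswapE Y Z W : lswap Y Z W = assoc Z Y W ∘ (braid Y Z ⊗' idm W) ∘ assoc_inv Y Z W.
Proof. reflexivity. Qed.
Opaque lswap.

Lemma lswap_tensor_last Y Z W1 W2 :
  (idm Z ⊗' assoc Y W1 W2) ∘ assoc Z (Y ⊗ W1) W2 ∘ (lswap Y Z W1 ⊗' idm W2)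
  = lswap Y Z (W1 ⊗ W2) ∘ (idm Y ⊗' assoc Z W1 W2) ∘ assoc Y (Z ⊗ W1) W2.
Proof.
  rewrite !lswapE. normalize.
  rwl (pentagonE Z Y W1 W2). rw (assoc_natl (Y := W1) (Z := W2) (braid Y Z)).
  rw (pentagonE1 Y Z W1 W2). reflexivity.
Qed.

Lemma hexagon2_braid X Y Z : braid (X ⊗ Y) Z ∘ assoc_inv X Y Z
  = assoc Z X Y ∘ (braid X Z ⊗' idm Y) ∘ assoc_inv X Z Y ∘ (idm X ⊗' braid Y Z).
Proof.
  apply (split_mono_cancel _ _ (assoc_inv Z X Y) (assoc Z X Y)); [apply assoc_invK|].
  normalize. rw (hexagon2E X Y Z). rw (assocK Z X Y). reflexivity.
Qed.
Lemma pentagon_invE2 W X Y Z : assoc_inv W (X ⊗ Y) Z ∘ (idm W ⊗' assoc_inv X Y Z)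
  = (assoc W X Y ⊗' idm Z) ∘ assoc_inv (W ⊗ X) Y Z ∘ assoc_inv W X (Y ⊗ Z).
Proof.
  normalize. rw (pentagon_invE W X Y Z). rw (whisker_r (assoc_invK W X Y)). reflexivity.
Qed.
Lemma lswap_tensor_first Y1 Y2 Z W :
  (idm Z ⊗' assoc Y1 Y2 W) ∘ lswap (Y1 ⊗ Y2) Z W ∘ assoc_inv Y1 Y2 (Z ⊗ W)
  = lswap Y1 Z (Y2 ⊗ W) ∘ (idm Y1 ⊗' lswap Y2 Z W).
Proof.
  rewrite !lswapE. normalize.
  rw (pentagon_invE Y1 Y2 Z W).
  rw (whisker_r (W := W) (hexagon2_braid Y1 Y2 Z)).
  rwl (pentagonE Z Y1 Y2 W).
  rw (assoc_natl (Y := Y2) (Z := W) (braid Y1 Z)).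
  rwl (pentagonE1 Y1 Z Y2 W).
  rw (assoc_natE (idm Y1) (braid Y2 Z) (idm W)).
  rw (assoc_invK Y1 (Y2 ⊗ Z) W).
  reflexivity.
Qed.
Lemma lswap_tensor_mid Y Z1 Z2 W :
  assoc Z1 Z2 (Y ⊗ W) ∘ lswap Y (Z1 ⊗ Z2) W ∘ (idm Y ⊗' assoc_inv Z1 Z2 W)
  = (idm Z1 ⊗' lswap Y Z2 W) ∘ lswap Y Z1 (Z2 ⊗ W).
Proof.
  rewrite !lswapE. normalize.
  rw (pentagonE Z1 Z2 Y W).
  rw (pentagon_invE2 Y Z1 Z2 W).
  rw (whisker_r3 (W := W) (hexagon1E Y Z1 Z2)).
  rw (assoc_natE (idm Z1) (braid Y Z2) (idm W)).
  rwl (pentagonE2 Z1 Y Z2 W).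
  rw (assoc_natl (Y := Z2) (Z := W) (braid Y Z1)).
  rw (assoc_invK (Y ⊗ Z1) Z2 W).
  reflexivity.
Qed.
Lemma lswap_natE {Y Y' Z Z' W W'} (f : hom Y Y') (g : hom Z Z') (h : hom W W') :
  lswap Y' Z' W' ∘ (f ⊗' (g ⊗' h)) = (g ⊗' (f ⊗' h)) ∘ lswap Y Z W.
Proof.
  rewrite !lswapE. normalize.
  rw (assoc_inv_natE f g h). rw (whisker_r_square h (braid_natE f g)). rw (assoc_natE g f h).
  reflexivity.
Qed.

Lemma mid_swapE X Y Z W :
  mid_swap X Y Z W = assoc_inv X Z (Y ⊗ W) ∘ (idm X ⊗' lswap Y Z W) ∘ assoc X Y (Z ⊗ W).
Proof. unfold mid_swap. rewrite lswapE. normalize. reflexivity. Qed.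
Opaque mid_swap.

Lemma lswap_tensor_midE Y Z1 Z2 W : lswap Y (Z1 ⊗ Z2) W ∘ (idm Y ⊗' assoc_inv Z1 Z2 W)
  = assoc_inv Z1 Z2 (Y ⊗ W) ∘ (idm Z1 ⊗' lswap Y Z2 W) ∘ lswap Y Z1 (Z2 ⊗ W).
Proof.
  apply (split_mono_cancel _ _ (assoc Z1 Z2 (Y ⊗ W)) (assoc_inv Z1 Z2 (Y ⊗ W))); [apply assocK|].
  normalize. rw (lswap_tensor_mid Y Z1 Z2 W). rw (assoc_invK Z1 Z2 (Y ⊗ W)). reflexivity.
Qed.

Lemma lswap_tensor_firstE Y1 Y2 Z W : (idm Z ⊗' assoc Y1 Y2 W) ∘ lswap (Y1 ⊗ Y2) Z W
  = lswap Y1 Z (Y2 ⊗ W) ∘ (idm Y1 ⊗' lswap Y2 Z W) ∘ assoc Y1 Y2 (Z ⊗ W).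
Proof.
  apply (split_epi_cancel _ _ (assoc_inv Y1 Y2 (Z ⊗ W)) (assoc Y1 Y2 (Z ⊗ W))); [apply assocK|].
  normalize. rw (lswap_tensor_first Y1 Y2 Z W). rw (assoc_invK Y1 Y2 (Z ⊗ W)). reflexivity.
Qed.
Lemma mid_swap_assoc M1 N1 M2 N2 M3 N3 :
  (assoc M1 M2 M3 ⊗' assoc N1 N2 N3) ∘ mid_swap (M1 ⊗ M2) (N1 ⊗ N2) M3 N3
    ∘ (mid_swap M1 N1 M2 N2 ⊗' idm (M3 ⊗ N3))
  = mid_swap M1 N1 (M2 ⊗ M3) (N2 ⊗ N3) ∘ (idm (M1 ⊗ N1) ⊗' mid_swap M2 N2 M3 N3)
    ∘ assoc (M1 ⊗ N1) (M2 ⊗ N2) (M3 ⊗ N3).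
Proof.
  apply (split_mono_cancel _ _ (assoc M1 (M2 ⊗ M3) (N1 ⊗ (N2 ⊗ N3)))
                              (assoc_inv M1 (M2 ⊗ M3) (N1 ⊗ (N2 ⊗ N3)))); [apply assocK|].
  rewrite !mid_swapE. normalize.
  rw (assoc_invK M1 (M2 ⊗ M3) (N1 ⊗ (N2 ⊗ N3))).
  rw (assoc_natr (X := M1) (Y := N1) (assoc_inv M2 M3 (N2 ⊗ N3))).
  rw (assoc_natr (X := M1) (Y := N1) (idm M2 ⊗' lswap N2 M3 N3)).
  rw (assoc_natr (X := M1) (Y := N1) (assoc M2 N2 (M3 ⊗ N3))).
  rw (pentagonE M1 N1 (M2 ⊗ N2) (M3 ⊗ N3)).
  rw (whisker_l (W := M1) (lswap_tensor_midE N1 M2 M3 (N2 ⊗ N3))).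
  rw (whisker_l (W := M1) (lswap_natE (idm N1) (idm M2) (lswap N2 M3 N3))).
  rw (whisker_l3 (W := M1) (eq_sym (lswap_tensor_last N1 M2 N2 (M3 ⊗ N3)))).
  rw (whisker_l3 (W := M1) (whisker_l3 (W := M2) (eq_sym (lswap_tensor_firstE N1 N2 M3 N3)))).
  rewrite (tensm_splitr (assoc M1 M2 M3) (assoc N1 N2 N3)). normalize.
  rw (assoc_natr (X := M1) (Y := M2 ⊗ M3) (assoc N1 N2 N3)).
  rwl (pentagonE2 M1 M2 M3 ((N1 ⊗ N2) ⊗ N3)).
  rw (assoc_invK (M1 ⊗ M2) M3 ((N1 ⊗ N2) ⊗ N3)).
  rw (assoc_natr (X := M1) (Y := M2) (lswap (N1 ⊗ N2) M3 N3)).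
  rw (pentagonE M1 M2 (N1 ⊗ N2) (M3 ⊗ N3)).
  rw (whisker_r (W := M3 ⊗ N3) (assoc_invK M1 M2 (N1 ⊗ N2))).
  rw (assoc_natE (idm M1) (lswap N1 M2 N2) (idm (M3 ⊗ N3))).
  rw (whisker_l (W := M1) (eq_sym (assoc_inv_natr (X := M2) (Y := M3) (assoc N1 N2 N3)))).
  reflexivity.
Qed.

Lemma lswap_tensor_lastE Y Z W1 W2 : (idm Z ⊗' assoc_inv Y W1 W2) ∘ lswap Y Z (W1 ⊗ W2)
  = assoc Z (Y ⊗ W1) W2 ∘ (lswap Y Z W1 ⊗' idm W2) ∘ assoc_inv Y (Z ⊗ W1) W2
    ∘ (idm Y ⊗' assoc_inv Z W1 W2).
Proof.
  apply (split_mono_cancel _ _ (idm Z ⊗' assoc Y W1 W2) (idm Z ⊗' assoc_inv Y W1 W2)).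
  { rewrite (whisker_l (assocK _ _ _)), tensm_idmE. reflexivity. }
  normalize. rw (whisker_l (assoc_invK Y W1 W2)). rw (lswap_tensor_last Y Z W1 W2).
  rw (assoc_invK Y (Z ⊗ W1) W2). rw (whisker_l (assoc_invK Z W1 W2)).
  reflexivity.
Qed.

Lemma mid_swap_assoc_inv M N P M' N' P' :
  assoc_inv (M ⊗ M') (N ⊗ N') (P ⊗ P') ∘ (idm (M ⊗ M') ⊗' mid_swap N P N' P')
    ∘ mid_swap M (N ⊗ P) M' (N' ⊗ P')
  = (mid_swap M N M' N' ⊗' idm (P ⊗ P')) ∘ mid_swap (M ⊗ N) P (M' ⊗ N') P'
    ∘ (assoc_inv M N P ⊗' assoc_inv M' N' P').
Proof.
  apply (split_mono_cancel _ _ (assoc M M' ((N ⊗ N') ⊗ (P ⊗ P')) ∘ assoc (M ⊗ M') (N ⊗ N') (P ⊗ P'))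
                      (assoc_inv (M ⊗ M') (N ⊗ N') (P ⊗ P') ∘ assoc_inv M M' ((N ⊗ N') ⊗ (P ⊗ P')))).
  { apply comp_rinv; apply assocK. }
  rewrite !mid_swapE. normalize.
  rw (assoc_invK (M ⊗ M') (N ⊗ N') (P ⊗ P')).
  rw (assoc_natr (X := M) (Y := M') (assoc_inv N N' (P ⊗ P'))).
  rw (assoc_natr (X := M) (Y := M') (idm N ⊗' lswap P N' P')).
  rw (assoc_natr (X := M) (Y := M') (assoc N P (N' ⊗ P'))).
  rw (assoc_invK M M' ((N ⊗ P) ⊗ (N' ⊗ P'))).
  rw (whisker_l (W := M) (lswap_tensor_firstE N P M' (N' ⊗ P'))).
  rw (whisker_l (W := M) (eq_sym (lswap_natE (idm N) (idm M') (lswap P N' P')))).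
  rw (whisker_l (W := M) (lswap_tensor_lastE N M' N' (P ⊗ P'))).
  rw (whisker_l3 (W := M) (whisker_l3 (W := N) (eq_sym (lswap_tensor_midE P M' N' P')))).
  rw (pentagonE M M' (N ⊗ N') (P ⊗ P')).
  rw (whisker_r (W := P ⊗ P') (assoc_invK M M' (N ⊗ N'))).
  rw (assoc_natE (idm M) (lswap N M' N') (idm (P ⊗ P'))).
  rwl (pentagonE2 M N (M' ⊗ N') (P ⊗ P')).
  rw (assoc_invK (M ⊗ N) (M' ⊗ N') (P ⊗ P')).
  rw (assoc_natr (X := M) (Y := N) (lswap P (M' ⊗ N') P')).
  rw (pentagonE M N P ((M' ⊗ N') ⊗ P')).
  rewrite (tensm_splitl (assoc_inv M N P) (assoc_inv M' N' P')). normalize.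
  rw (whisker_r (W := (M' ⊗ N') ⊗ P') (assoc_invK M N P)).
  rw (assoc_natr (X := M) (Y := N ⊗ P) (assoc_inv M' N' P')).
  rw (whisker_l (W := M) (assoc_natr (X := N) (Y := P) (assoc_inv M' N' P'))).
  reflexivity.
Qed.

Lemma mid_swap_natE {X X' Y Y' Z Z' W W'} (f : hom X X') (g : hom Y Y') (h : hom Z Z') (k : hom W W') :
  mid_swap X' Y' Z' W' ∘ ((f ⊗' g) ⊗' (h ⊗' k)) = ((f ⊗' h) ⊗' (g ⊗' k)) ∘ mid_swap X Y Z W.
Proof.
  rewrite !mid_swapE. normalize.
  rw (assoc_natE f g (h ⊗' k)). rw (whisker_l_square f (lswap_natE g h k)).
  rw (assoc_inv_natE f h (g ⊗' k)). reflexivity.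
Qed.

Lemma lswap_unit_mid X Y : lunit (X ⊗ Y) ∘ lswap X 𝟙 Y = idm X ⊗' lunit Y.
Proof.
  rewrite lswapE. normalize. rw (lunit_tensor X Y). rw (whisker_r (W := Y) (lunit_braid X)).
  rw (triangleV X Y). reflexivity.
Qed.
Lemma lswap_unit_first M N : (idm M ⊗' lunit N) ∘ lswap 𝟙 M N = lunit (M ⊗ N).
Proof.
  rewrite lswapE. normalize. rw (triangleE M N). rw (whisker_r (W := N) (runit_braid M)).
  rw (lunit_tensorV M N). reflexivity.
Qed.
Lemma lswap_unit_first_last Y :
  runit Y ∘ (idm Y ⊗' runit 𝟙) ∘ lswap 𝟙 Y 𝟙 = lunit Y ∘ (idm 𝟙 ⊗' runit Y).
Proof.
  rewrite lswapE. normalize. rw (runit_tensor Y 𝟙). rwl (runit_natE (runit Y)).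
  rw (whisker_r (W := 𝟙) (runit_braid Y)).
  rw (runit_natE (lunit Y)). rw (runit_tensorV 𝟙 Y). reflexivity.
Qed.
Lemma lswap_unit_mid_last N :
  lunit N ∘ (idm 𝟙 ⊗' runit N) ∘ lswap N 𝟙 𝟙 = runit N ∘ (idm N ⊗' runit 𝟙).
Proof.
  rewrite lswapE. normalize. rw (runit_tensor 𝟙 N). rwl (runit_natE (lunit N)).
  rw (whisker_r (W := 𝟙) (lunit_braid N)).
  rw (runit_natE (runit N)). rw (runit_tensorV N 𝟙). reflexivity.
Qed.

Lemma mid_swap_lunit X Y :
  lunit (X ⊗ Y) ∘ (lunit 𝟙 ⊗' idm (X ⊗ Y)) ∘ mid_swap 𝟙 X 𝟙 Y = lunit X ⊗' lunit Y.
Proof.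
  rewrite mid_swapE. normalize.
  rw (lunit_tensorV 𝟙 (X ⊗ Y)). rw (lunit_natE (lswap X 𝟙 Y)). rw (lunit_tensor X (𝟙 ⊗ Y)).
  rw (lswap_unit_mid X Y).
  rewrite (tensm_splitr (lunit X) (lunit Y)). reflexivity.
Qed.
Lemma mid_swap_runit X Y :
  runit (X ⊗ Y) ∘ (idm (X ⊗ Y) ⊗' lunit 𝟙) ∘ mid_swap X 𝟙 Y 𝟙 = runit X ⊗' runit Y.
Proof.
  rewrite mid_swapE, lunit_unit_runit. normalize.
  rw (eq_sym (assoc_inv_natr (X := X) (Y := Y) (runit 𝟙))).
  rw (runit_tensorV X Y). rw (whisker_l3 (W := X) (lswap_unit_first_last Y)).
  rw (eq_sym (assoc_natr (X := X) (Y := 𝟙) (runit Y))).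
  rw (triangleE X Y).
  rewrite (tensm_splitl (runit X) (runit Y)). reflexivity.
Qed.
Lemma mid_swap_lunit_unit M N :
  (lunit M ⊗' lunit N) ∘ mid_swap 𝟙 𝟙 M N = lunit (M ⊗ N) ∘ (lunit 𝟙 ⊗' idm (M ⊗ N)).
Proof.
  rewrite mid_swapE, lunit_unit_runit. rewrite (tensm_splitl (lunit M) (lunit N)). normalize.
  rw (eq_sym (assoc_inv_natr (X := 𝟙) (Y := M) (lunit N))).
  rw (lunit_tensorV M N). rw (whisker_l (W := 𝟙) (lswap_unit_first M N)). rw (triangleE 𝟙 (M ⊗ N)).
  reflexivity.
Qed.
Lemma mid_swap_runit_unit M N :
  (runit M ⊗' runit N) ∘ mid_swap M N 𝟙 𝟙 = runit (M ⊗ N) ∘ (idm (M ⊗ N) ⊗' lunit 𝟙).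
Proof.
  rewrite mid_swapE, lunit_unit_runit. rewrite (tensm_splitl (runit M) (runit N)). normalize.
  rw (eq_sym (assoc_inv_natr (X := M) (Y := 𝟙) (runit N))).
  rw (triangleV M N). rw (whisker_l3 (W := M) (lswap_unit_mid_last N)).
  rw (eq_sym (assoc_natr (X := M) (Y := N) (runit 𝟙))).
  rw (runit_tensor M N). reflexivity.
Qed.

Lemma mid_swap_natl {X X' Y Y' Z W} (f : hom X X') (g : hom Y Y') :
  mid_swap X' Y' Z W ∘ ((f ⊗' g) ⊗' idm (Z ⊗ W)) = ((f ⊗' idm Z) ⊗' (g ⊗' idm W)) ∘ mid_swap X Y Z W.
Proof. rewrite <- tensm_idmE, mid_swap_natE. reflexivity. Qed.
Lemma mid_swap_natr {X Y Z Z' W W'} (h : hom Z Z') (k : hom W W') :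
  mid_swap X Y Z' W' ∘ (idm (X ⊗ Y) ⊗' (h ⊗' k)) = ((idm X ⊗' h) ⊗' (idm Y ⊗' k)) ∘ mid_swap X Y Z W.
Proof. rewrite <- tensm_idmE, mid_swap_natE. reflexivity. Qed.

(** * Tensor products of monoids *)

Definition tensor_mu (M N : ob) (mM : hom (M ⊗ M) M) (mN : hom (N ⊗ N) N) :
    hom ((M ⊗ N) ⊗ (M ⊗ N)) (M ⊗ N) :=
  (mM ⊗' mN) ∘ mid_swap M N M N.
Definition tensor_u {M N : ob} (uM : hom 𝟙 M) (uN : hom 𝟙 N) : hom 𝟙 (M ⊗ N) := (uM ⊗' uN) ∘ lunit_inv 𝟙.

Lemma tensor_monoid {M N mM uM mN uN} : is_monoid M mM uM -> is_monoid N mN uN ->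
  is_monoid (M ⊗ N) (tensor_mu M N mM mN) (tensor_u uM uN).
Proof.
  intros [aM [lM rM]] [aN [lN rN]]. unfold tensor_mu, tensor_u. split; [|split].
  - reassoc. rewrite (tensm_compl (mid_swap M N M N) (mM ⊗' mN) (idm (M ⊗ N))). reassoc.
    rw_assoc (mid_swap_natl (Z := M) (W := N) mM mN).
    rw_assoc (eq_sym (tensm_compE (mM ⊗' idm M) mM (mN ⊗' idm N) mN)).
    rewrite aM, aN.
    rewrite (tensm_compE (assoc M M M) (mM ∘ (idm M ⊗' mM)) (assoc N N N) (mN ∘ (idm N ⊗' mN))).
    reassoc.
    rw_assoc (mid_swap_assoc M N M N M N).
    rewrite (tensm_compE (idm M ⊗' mM) mM (idm N ⊗' mN) mN). reassoc.
    rw_assoc (eq_sym (mid_swap_natr (X := M) (Y := N) mM mN)).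
    rewrite (tensm_compr (idm (M ⊗ N)) (mid_swap M N M N) (mM ⊗' mN)). reassoc. reflexivity.
  - rewrite (tensm_compl (lunit_inv 𝟙) (uM ⊗' uN) (idm (M ⊗ N))). reassoc.
    rw_assoc (mid_swap_natl (Z := M) (W := N) uM uN).
    rw_assoc (eq_sym (tensm_compE (uM ⊗' idm M) mM (uN ⊗' idm N) mN)).
    rewrite lM, lN. rw_assoc (mid_swap_lunit_unit M N).
    rw_assoc (whisker_r (W := M ⊗ N) (lunit_invK 𝟙)). rewrite tensm_idmE, comp_idm. reflexivity.
  - rewrite (tensm_compr (idm (M ⊗ N)) (lunit_inv 𝟙) (uM ⊗' uN)). reassoc.
    rw_assoc (mid_swap_natr (X := M) (Y := N) uM uN).
    rw_assoc (eq_sym (tensm_compE (idm M ⊗' uM) mM (idm N ⊗' uN) mN)).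
    rewrite rM, rN. rw_assoc (mid_swap_runit_unit M N).
    rw_assoc (whisker_l (W := M ⊗ N) (lunit_invK 𝟙)). rewrite tensm_idmE, comp_idm. reflexivity.
Qed.

Lemma tensm_monoid_hom {M N M' N' mM uM mN uN mM' uM' mN' uN'} {f : hom M M'} {g : hom N N'} :
  monoid_hom M mM uM M' mM' uM' f -> monoid_hom N mN uN N' mN' uN' g ->
  monoid_hom (M ⊗ N) (tensor_mu M N mM mN) (tensor_u uM uN)
             (M' ⊗ N') (tensor_mu M' N' mM' mN') (tensor_u uM' uN') (f ⊗' g).
Proof.
  intros [fm fu] [gm gu]. unfold tensor_mu, tensor_u. split.
  - reassoc. rw_assoc (mid_swap_natE f g f g).
    rw_assoc (eq_sym (tensm_compE (f ⊗' f) mM' (g ⊗' g) mN')).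
    rewrite <- fm, <- gm, tensm_compE. reassoc. reflexivity.
  - reassoc. rw_assoc (eq_sym (tensm_compE uM f uN g)). rewrite fu, gu. reflexivity.
Qed.
Lemma monoid_hom_comp {M N P mM uM mN uN mP uP} {f : hom M N} {g : hom N P} :
  monoid_hom M mM uM N mN uN f -> monoid_hom N mN uN P mP uP g -> monoid_hom M mM uM P mP uP (g ∘ f).
Proof.
  intros [fm fu] [gm gu]. split.
  - rewrite <- compA, fm, compA, gm, <- compA, tensm_compE. reflexivity.
  - rewrite <- compA, fu, gu. reflexivity.
Qed.
Lemma monoid_hom_idm {M mM uM} : monoid_hom M mM uM M mM uM (idm M).
Proof. split. rewrite idm_comp, tensm_idmE, comp_idm. reflexivity. apply idm_comp. Qed.

Lemma assoc_inv_unit_lunit_inv : assoc_inv 𝟙 𝟙 𝟙 ∘ (idm 𝟙 ⊗' lunit_inv 𝟙) = lunit_inv 𝟙 ⊗' idm 𝟙.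
Proof.
  apply (split_mono_cancel _ _ (lunit 𝟙 ⊗' idm 𝟙) (lunit_inv 𝟙 ⊗' idm 𝟙)).
  { rewrite (whisker_r (lunitK 𝟙)), tensm_idmE. reflexivity. }
  rw_assoc (lunit_tensorV 𝟙 𝟙). rewrite lunit_unit_tensor.
  rewrite (whisker_l (lunit_invK 𝟙)), (whisker_r (lunit_invK 𝟙)). reflexivity.
Qed.

Lemma assoc_inv_monoid_hom {M N P mM uM mN uN mP uP} :
  monoid_hom (M ⊗ (N ⊗ P)) (tensor_mu M (N ⊗ P) mM (tensor_mu N P mN mP)) (tensor_u uM (tensor_u uN uP))
             ((M ⊗ N) ⊗ P) (tensor_mu (M ⊗ N) P (tensor_mu M N mM mN) mP) (tensor_u (tensor_u uM uN) uP)
             (assoc_inv M N P).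
Proof.
  unfold tensor_mu, tensor_u. split.
  - reassoc. rewrite (tensm_compr mM (mid_swap N P N P) (mN ⊗' mP)). reassoc.
    rw_assoc (assoc_inv_natE mM mN mP).
    rewrite (tensm_compl (mid_swap M N M N) (mM ⊗' mN) mP). reassoc.
    rw_assoc (mid_swap_assoc_inv M N P M N P). reflexivity.
  - reassoc. rewrite (tensm_compr uM (lunit_inv 𝟙) (uN ⊗' uP)). reassoc.
    rw_assoc (assoc_inv_natE uM uN uP).
    rw_assoc assoc_inv_unit_lunit_inv.
    rewrite (tensm_compl (lunit_inv 𝟙) (uM ⊗' uN) uP). reassoc. reflexivity.
Qed.

Lemma lunit_monoid_hom {B mB uB} :
  monoid_hom (𝟙 ⊗ B) (tensor_mu 𝟙 B unit_mu mB) (tensor_u unit_u uB) B mB uB (lunit B).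
Proof.
  unfold tensor_mu, tensor_u, unit_mu, unit_u. split.
  - rewrite (tensm_splitr (lunit 𝟙) mB). reassoc. rw_assoc (lunit_natE mB).
    rw_assoc (mid_swap_lunit B B). reflexivity.
  - reassoc. rw_assoc (lunit_natE uB). rw_assoc (lunit_invK 𝟙). apply comp_idm.
Qed.
Lemma runit_monoid_hom {B mB uB} :
  monoid_hom (B ⊗ 𝟙) (tensor_mu B 𝟙 mB unit_mu) (tensor_u uB unit_u) B mB uB (runit B).
Proof.
  unfold tensor_mu, tensor_u, unit_mu, unit_u. split.
  - rewrite (tensm_splitl mB (lunit 𝟙)). reassoc. rw_assoc (runit_natE mB).
    rw_assoc (mid_swap_runit B B). reflexivity.
  - reassoc. rw_assoc (runit_natE uB). rewrite <- lunit_unit_runit. rw_assoc (lunit_invK 𝟙).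
    apply comp_idm.
Qed.

Lemma unit_monoid : is_monoid 𝟙 unit_mu unit_u.
Proof.
  unfold is_monoid, unit_mu, unit_u. rewrite tensm_idmE, comp_idm.
  split; [|split; [reflexivity|apply lunit_unit_runit]].
  rewrite <- (lunit_tensor 𝟙 𝟙), lunit_natE, compA. reflexivity.
Qed.

(** * The initial coaction *)

Lemma comodule_counitE {A B} {rho : hom A (A ⊗ B)} {e : hom B 𝟙} :
  runit A ∘ (idm A ⊗' e) ∘ rho = idm A -> (idm A ⊗' e) ∘ rho = runit_inv A.
Proof.
  intros H. apply (split_mono_cancel _ _ (runit A) (runit_inv A)); [apply runitK|].
  rewrite compA, H, runit_invK. reflexivity.
Qed.
Lemma comodule_coassocE {A B} {rho : hom A (A ⊗ B)} {d : hom B (B ⊗ B)} :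
  assoc_inv A B B ∘ (idm A ⊗' d) ∘ rho = (rho ⊗' idm B) ∘ rho ->
  (idm A ⊗' d) ∘ rho = assoc A B B ∘ (rho ⊗' idm B) ∘ rho.
Proof.
  intros H. apply (split_mono_cancel _ _ (assoc_inv A B B) (assoc A B B)); [apply assoc_invK|].
  rewrite compA, H, <- !compA, (compA _ _ (assoc_inv A B B)), assocK, idm_comp. reflexivity.
Qed.

Section InitialCoaction.
Variables (Omega : Type) (s t : Omega -> nat) (A : ob) (opsA : magma_ops Omega s t A).
Variable D : forall Q : ob, hom (Q ⊗ Q) Q -> hom 𝟙 Q -> hom A (A ⊗ Q) -> Prop.
Variables (B0 : ob) (mu0 : hom (B0 ⊗ B0) B0) (u0 : hom 𝟙 B0) (rho0 : hom A (A ⊗ B0)).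

Hypothesis D_comeasuring : forall Q mu u rho, D Q mu u rho ->
  is_monoid Q mu u /\ is_comeasuring Omega s t A A opsA opsA Q mu u rho.
Hypothesis D_rho0 : D B0 mu0 u0 rho0.
Hypothesis rho0_initial : forall Q mu u rho, D Q mu u rho ->
  exists! phi : hom B0 Q, monoid_hom B0 mu0 u0 Q mu u phi /\ (idm A ⊗' phi) ∘ rho0 = rho.
Hypothesis D_coarsening : forall Q1 mu1 u1 rho Q2 mu2 u2 (tau : hom Q1 Q2),
  D Q1 mu1 u1 rho -> is_monoid Q2 mu2 u2 -> monoid_hom Q1 mu1 u1 Q2 mu2 u2 tau ->
  D Q2 mu2 u2 ((idm A ⊗' tau) ∘ rho).

Lemma B0_monoid : is_monoid B0 mu0 u0.
Proof. exact (proj1 (D_comeasuring _ _ _ _ D_rho0)). Qed.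

Lemma B0_tensor_monoid : is_monoid (B0 ⊗ B0) (tmu B0 mu0) (tu B0 u0).
Proof. exact (tensor_monoid B0_monoid B0_monoid). Qed.

Lemma coarsening_inj Q mu u (phi psi : hom B0 Q) :
  is_monoid Q mu u -> monoid_hom B0 mu0 u0 Q mu u phi -> monoid_hom B0 mu0 u0 Q mu u psi ->
  (idm A ⊗' phi) ∘ rho0 = (idm A ⊗' psi) ∘ rho0 -> phi = psi.
Proof.
  intros HQ Hphi Hpsi E.
  destruct (rho0_initial _ _ _ _ (D_coarsening _ _ _ _ _ _ _ _ D_rho0 HQ Hphi)) as [chi [_ Hchi]].
  transitivity chi; [symmetry|]; apply Hchi; split; auto.
Qed.

Variables (d0 : hom B0 (B0 ⊗ B0)) (e0 : hom B0 𝟙).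
Hypothesis d0_monoid_hom : monoid_hom B0 mu0 u0 (B0 ⊗ B0) (tmu B0 mu0) (tu B0 u0) d0.
Hypothesis d0_rho0 : (idm A ⊗' d0) ∘ rho0 = assoc A B0 B0 ∘ (rho0 ⊗' idm B0) ∘ rho0.
Hypothesis e0_monoid_hom : monoid_hom B0 mu0 u0 𝟙 unit_mu unit_u e0.
Hypothesis e0_rho0 : (idm A ⊗' e0) ∘ rho0 = runit_inv A.

Lemma d0_coassoc : assoc B0 B0 B0 ∘ (d0 ⊗' idm B0) ∘ d0 = (idm B0 ⊗' d0) ∘ d0.
Proof.
  enough (E : (d0 ⊗' idm B0) ∘ d0 = assoc_inv B0 B0 B0 ∘ (idm B0 ⊗' d0) ∘ d0).
  { rewrite <- compA, E. normalize. rw (assoc_invK B0 B0 B0). reflexivity. }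
  apply (coarsening_inj _ (tensor_mu (B0 ⊗ B0) B0 (tmu B0 mu0) mu0) (tensor_u (tu B0 u0) u0)).
  - exact (tensor_monoid B0_tensor_monoid B0_monoid).
  - eapply monoid_hom_comp; [exact d0_monoid_hom|].
    exact (tensm_monoid_hom d0_monoid_hom monoid_hom_idm).
  - eapply monoid_hom_comp; [exact d0_monoid_hom|].
    eapply monoid_hom_comp; [|apply assoc_inv_monoid_hom].
    exact (tensm_monoid_hom monoid_hom_idm d0_monoid_hom).
  - (* both sides are the iterated coaction (rho0 ⊗ id ⊗ id) (rho0 ⊗ id) rho0 *)
    transitivity ((idm A ⊗' (d0 ⊗' idm B0)) ∘ (assoc A B0 B0 ∘ (rho0 ⊗' idm B0) ∘ rho0)).
    { normalize. rw d0_rho0. reflexivity. }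
    symmetry. normalize. rw d0_rho0.
    rwl (assoc_natr (X := A) (Y := B0) d0). rwl (tensm_interchange rho0 d0). rw d0_rho0.
    rwl (assoc_natE (idm A) d0 (idm B0)). rw (whisker_r (W := B0) d0_rho0).
    rwl (assoc_natl (Y := B0) (Z := B0) rho0). rw (pentagonE2 A B0 B0 B0). reflexivity.
Qed.

Lemma e0_counit_l : lunit B0 ∘ (e0 ⊗' idm B0) ∘ d0 = idm B0.
Proof.
  apply (coarsening_inj _ _ _ _ _ B0_monoid); [| apply monoid_hom_idm |].
  - eapply monoid_hom_comp; [exact d0_monoid_hom|].
    eapply monoid_hom_comp; [|apply lunit_monoid_hom].
    exact (tensm_monoid_hom e0_monoid_hom monoid_hom_idm).
  - normalize. rw d0_rho0. rwl (assoc_natE (idm A) e0 (idm B0)). rw (whisker_r (W := B0) e0_rho0).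
    rw (triangleE A B0). rw (whisker_r (W := B0) (runit_invK A)). reflexivity.
Qed.

Lemma e0_counit_r : runit B0 ∘ (idm B0 ⊗' e0) ∘ d0 = idm B0.
Proof.
  apply (coarsening_inj _ _ _ _ _ B0_monoid); [| apply monoid_hom_idm |].
  - eapply monoid_hom_comp; [exact d0_monoid_hom|].
    eapply monoid_hom_comp; [|apply runit_monoid_hom].
    exact (tensm_monoid_hom monoid_hom_idm e0_monoid_hom).
  - normalize. rw d0_rho0. rwl (assoc_natr (X := A) (Y := B0) e0). rwl (tensm_interchange rho0 e0).
    rw e0_rho0. rw (runit_tensor A B0). rw (runit_natE rho0). rw (runit_invK A). reflexivity.
Qed.

Lemma rho0_coaction : is_coaction Omega s t A opsA B0 mu0 u0 d0 e0 rho0.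
Proof.
  split; [|split].
  - split; [exact B0_monoid|split; [|split; [exact d0_monoid_hom|exact e0_monoid_hom]]].
    split; [exact d0_coassoc|split; [exact e0_counit_l|exact e0_counit_r]].
  - exact (proj2 (D_comeasuring _ _ _ _ D_rho0)).
  - split.
    + rewrite <- compA, d0_rho0. normalize. rw (assocK A B0 B0). reflexivity.
    + rewrite <- compA, e0_rho0. apply runit_invK.
Qed.

Lemma rho0_coaction_unique d e :
  is_coaction Omega s t A opsA B0 mu0 u0 d e rho0 -> d = d0 /\ e = e0.
Proof.
  intros [[_ [_ [Hd He]]] [_ [Hd_rho0 He_rho0]]]. split.
  - apply (coarsening_inj _ _ _ _ _ B0_tensor_monoid Hd d0_monoid_hom).
    rewrite d0_rho0. exact (comodule_coassocE Hd_rho0).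
  - apply (coarsening_inj _ _ _ _ _ unit_monoid He e0_monoid_hom).
    rewrite e0_rho0. exact (comodule_counitE He_rho0).
Qed.

Lemma coaction_monoid_hom_comonoid_hom B mu u d e rho (phi : hom B0 B) :
  is_coaction Omega s t A opsA B mu u d e rho ->
  monoid_hom B0 mu0 u0 B mu u phi -> (idm A ⊗' phi) ∘ rho0 = rho ->
  d ∘ phi = (phi ⊗' phi) ∘ d0 /\ e ∘ phi = e0.
Proof.
  intros [[HB [_ [Hd He]]] [_ [Hd_rho He_rho]]] Hphi Hphi_rho. split.
  - apply (coarsening_inj _ _ _ _ _ (tensor_monoid HB HB)).
    + exact (monoid_hom_comp Hphi Hd).
    + exact (monoid_hom_comp d0_monoid_hom (tensm_monoid_hom Hphi Hphi)).
    + transitivity ((idm A ⊗' d) ∘ rho).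
      { normalize. rw Hphi_rho. reflexivity. }
      rewrite (comodule_coassocE Hd_rho). normalize. rw d0_rho0. rwl (assoc_natE (idm A) phi phi).
      rewrite (tensm_splitl (idm A ⊗' phi) phi). normalize. rwl (tensm_interchange rho0 phi).
      rw (whisker_r (W := B) Hphi_rho). rw Hphi_rho. reflexivity.
  - apply (coarsening_inj _ _ _ _ _ unit_monoid (monoid_hom_comp Hphi He) e0_monoid_hom).
    rewrite e0_rho0. normalize. rw Hphi_rho. exact (comodule_counitE He_rho).
Qed.

End InitialCoaction.
End BraidedMonoidal.

Theorem theorem4p31
  (ob : Type) (hom : ob -> ob -> Type) (C : @BMCData ob hom) (HC : is_bmc ob hom C)
  (Omega : Type) (s t : Omega -> nat) (A : ob) (opsA : magma_ops Omega s t A)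
  (* the full subcategory D of Comeas(A,A), given by its class of objects *)
  (D : forall Q : ob, hom (Q ⊗ Q) Q -> hom 𝟙 Q -> hom A (A ⊗ Q) -> Prop)
  (B0 : ob) (mu0 : hom (B0 ⊗ B0) B0) (u0 : hom 𝟙 B0) (rho0 : hom A (A ⊗ B0)) :
  (* objects of D are objects of Comeas(A,A) *)
  (forall Q mu u rho, D Q mu u rho -> is_monoid Q mu u /\ is_comeasuring Omega s t A A opsA opsA Q mu u rho) ->
  (* rho0 is an initial object of D *)
  D B0 mu0 u0 rho0 ->
  (forall Q mu u rho, D Q mu u rho ->
     exists! phi : hom B0 Q, monoid_hom B0 mu0 u0 Q mu u phi /\ (idm A ⊗' phi) ∘ rho0 = rho) ->
  (* D is closed under coarsenings *)
  (forall Q1 mu1 u1 rho Q2 mu2 u2 (tau : hom Q1 Q2),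
     D Q1 mu1 u1 rho -> is_monoid Q2 mu2 u2 -> monoid_hom Q1 mu1 u1 Q2 mu2 u2 tau ->
     D Q2 mu2 u2 ((idm A ⊗' tau) ∘ rho)) ->
  (* A -> A ⊗ 𝟙 (for the monoid 𝟙) is in D *)
  D 𝟙 unit_mu unit_u (runit_inv A) ->
  (* (rho0 ⊗ id) rho0 : A -> A ⊗ (B0 ⊗ B0) (for the monoid B0 ⊗ B0) is in D *)
  D (B0 ⊗ B0) (tmu B0 mu0) (tu B0 u0) (assoc A B0 B0 ∘ (rho0 ⊗' idm B0) ∘ rho0) ->
  exists (d0 : hom B0 (B0 ⊗ B0)) (e0 : hom B0 𝟙),
    is_coaction Omega s t A opsA B0 mu0 u0 d0 e0 rho0 /\
    (forall (d : hom B0 (B0 ⊗ B0)) (e : hom B0 𝟙),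
       is_coaction Omega s t A opsA B0 mu0 u0 d e rho0 -> d = d0 /\ e = e0) /\
    (forall (B : ob) (mu : hom (B ⊗ B) B) (u : hom 𝟙 B) (d : hom B (B ⊗ B))
            (e : hom B 𝟙) (rho : hom A (A ⊗ B)),
       is_coaction Omega s t A opsA B mu u d e rho -> D B mu u rho ->
       exists! phi : hom B0 B,
         bimonoid_hom B0 mu0 u0 d0 e0 B mu u d e phi /\ (idm A ⊗' phi) ∘ rho0 = rho).
Proof.
  intros D_comeas D_rho0 rho0_init D_coarse D_runit_inv D_rho0_iterated.
  destruct (rho0_init _ _ _ _ D_rho0_iterated) as [d0 [[d0_hom d0_rho0] _]].
  destruct (rho0_init _ _ _ _ D_runit_inv) as [e0 [[e0_hom e0_rho0] _]].
  exists d0, e0. split; [|split].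
  - eapply rho0_coaction; eassumption.
  - intros d e Hcoact. eapply rho0_coaction_unique; eassumption.
  - intros B mu u d e rho Hcoact D_rho.
    destruct (rho0_init _ _ _ _ D_rho) as [phi [[phi_hom phi_rho0] phi_unique]].
    exists phi. split.
    + split; [split; [exact phi_hom|]|exact phi_rho0].
      eapply coaction_monoid_hom_comonoid_hom; eassumption.
    + intros psi [[psi_hom _] psi_rho0]. apply phi_unique. split; assumption.
Qed.
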